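(* Let $e_1,\dots,e_m$ be a chain of distinct edges, i.e. $e_j$ and $e_{j+1}$ are linked for each $j=1,\dots,m-1$, and let $1\le i\le m$. Fix $\lambda(e_i)$ and the values of $\lambda$ on all edges not in the chain. Then $$\int\prod_{j\ne i}\frac{d\lambda(e_j)}{\lambda(e_j)}\le(\ln4)^{m-1},$$ where the integral is over the set of $(\lambda(e_j))_{j\ne i}\in(0,\infty)^{m-1}$ for which the resulting point lies in $\Delta_L$.
   Context: $\Gamma$ is a finite trivalent graph with edge set $E$. A linking choice $L$ assigns to each vertex $v$ one of its three edges, the designated minimal edge at $v$. $\Delta_L$ is the set of $\lambda\in(0,\infty)^E$ such that, at every vertex $v$ with edges $e,f,g$: - the triangle inequalities $\lambda(e)\le\lambda(f)+\lambda(g)$, $\lambda(f)\le\lambda(e)+\lambda(g)$, $\lambda(g)\le\lambda(e)+\lambda(f)$ hold, and - the designated minimal edge has $\lambda$-value at most those of the other two. Two edges are linked if they meet at a vertex whose designated minimal edge is the third edge there. *)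

From HB Require Import structures.
From mathcomp Require Import all_boot all_order all_algebra.
From mathcomp Require Import all_classical all_reals all_analysis.
Set Implicit Arguments. Unset Strict Implicit. Unset Printing Implicit Defensive.
Import Order.TTheory GRing.Theory Num.Theory.
Local Open Scope classical_set_scope.
Local Open Scope ring_scope.

(* A finite trivalent graph: finite vertex type V, finite edge type E, and
   for each vertex v its three (half-)edge slots  ends v 0, ends v 1, ends v 2.
   Every edge has exactly two endpoint incidences (a loop at v occupies two
   slots of v). Multiple edges and loops are allowed. *)
Definition trivalent (V E : finType) (ends : V -> 'I_3 -> E) : Prop :=
  forall e : E, #|[set p : V * 'I_3 | ends p.1 p.2 == e]| = 2.

(* A linking choice designates at each vertex one of its three edge slots
   (L v), the designated minimal edge at v is  ends v (L v). *)

Definition DeltaL (R : realType) (V E : finType) (ends : V -> 'I_3 -> E)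
  (L : V -> 'I_3) : set (E -> R) :=
  [set lam | (forall e, 0 < lam e) /\
     (forall v : V,
        let a := lam (ends v 0) in let b := lam (ends v 1) in
        let c := lam (ends v 2) in
        [/\ a <= b + c, b <= a + c & c <= a + b]) /\
     (forall (v : V) (k : 'I_3), lam (ends v (L v)) <= lam (ends v k))].

Definition linked (V E : finType) (ends : V -> 'I_3 -> E) (L : V -> 'I_3)
  (e f : E) : Prop :=
  exists (v : V) (k1 k2 : 'I_3),
    [/\ k1 != k2, L v != k1, L v != k2, ends v k1 = e & ends v k2 = f].

Definition upd (R : Type) (E : eqType) (lam : E -> R) (e : E) (x : R) : E -> R :=
  fun e' => if e' == e then x else lam e'.

Fixpoint iint (R : realType) (E : eqType) (s : seq E)
  (F : (E -> R) -> \bar R) (lam : E -> R) : \bar R :=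
  match s with
  | [::] => F lam
  | e :: s' =>
      (\int[@lebesgue_measure R]_(x in (`]0%R, +oo[%classic : set R))
         iint s' F (upd lam e x))%E
  end.

(* On [DeltaL ends L], two linked edges [e], [f] satisfy [lam e <= 2 * lam f]:
   at their common vertex the third edge is minimal, so the triangle inequality
   gives [lam e <= lam f + lam g <= 2 * lam f].  Hence along the chain every factor
   [1 / lam (c j)] equals [kern (lam (c j)) (lam (c j'))], where [c j'] is the
   neighbour of [c j] on the side of the fixed edge [c i] and [kern x y] is [1/x]
   on [[y/2, 2y]] and [0] elsewhere.  As [\int kern x y dx = ln 4] for every [y],
   the edges after [c i] integrate out one at a time, innermost first.  For the
   edges before [c i] the kernel of each variable involves a more inner variable,
   so those integrals are regrouped into the iterated kernel [kern_iter] and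
   bounded by Tonelli's theorem. *)

From HB Require Import structures.
From mathcomp Require Import all_boot all_order all_algebra.
From mathcomp Require Import all_classical all_reals all_analysis.
From mathcomp Require Import ring lra measurable_realfun.
Import Order.TTheory GRing.Theory Num.Theory.
Import numFieldNormedType.Exports.
Local Open Scope classical_set_scope.
Local Open Scope ring_scope.

Section lebesgue_integral_nomeas.
Local Open Scope ereal_scope.
Context {R : realType}.
Notation mu := (@lebesgue_measure R).

Lemma ge0_le_integral_nomeas (D : set R) (f g : R -> \bar R) :
  (forall x, D x -> 0 <= f x) -> (forall x, D x -> f x <= g x) ->
  \int[mu]_(x in D) f x <= \int[mu]_(x in D) g x.
Proof.
move=> f0 fg; have g0 x : D x -> 0 <= g x by move=> Dx; exact: le_trans (f0 _ Dx) (fg _ Dx).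
rewrite !ge0_integralE //; apply: le_ereal_sup => _ [h hf <-].
exists h => // x; apply: le_trans (hf x) _.
by rewrite /patch; case: ifP => // /set_mem; exact: fg.
Qed.

Lemma ge0_integral_le_setT (D : set R) (f : R -> \bar R) : (forall x, 0 <= f x) ->
  \int[mu]_(x in D) f x <= \int[mu]_x f x.
Proof.
move=> f0; rewrite integral_mkcond.
by apply: ge0_le_integral_nomeas => x _; rewrite /patch; case: ifP.
Qed.

End lebesgue_integral_nomeas.

Section kernel.
Context {R : realType}.
Notation mu := (@lebesgue_measure R).

(* No guard [0 < y] is needed: [[y/2, 2y]] is empty for [y < 0], and for
   [y = 0] the value is [0^-1 = 0]. *)
Definition kern (x y : R) : R := if y / 2 <= x <= 2 * y then x^-1 else 0.

Lemma kern_ge0 x y : 0 <= kern x y.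
Proof.
rewrite /kern; case: ifP => // /andP[yx xy].
by rewrite invr_ge0; lra.
Qed.

Lemma kernE x y : 0 < y -> x <= 2 * y -> y <= 2 * x -> kern x y = x^-1.
Proof.
move=> y0 xy yx; rewrite /kern xy andbT.
by have -> : y / 2 <= x by rewrite ler_pdivrMr //; lra.
Qed.

Lemma kern_le0 x y : y <= 0 -> kern x y = 0.
Proof.
rewrite /kern; case: ifP => // /andP[yx xy] y0.
by rewrite (_ : x = 0) ?invr0 //; lra.
Qed.

Lemma integral_kern_le y : (\int[mu]_x (kern x y)%:E <= (ln 4)%:E)%E.
Proof.
have [y0|y0] := leP y 0.
  by rewrite integral0_eq ?lee_fin ?ln_ge0 ?ler1n // => x _; rewrite kern_le0.
have y2_lt_2y : y / 2 < 2 * y by lra.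
have kernT : (fun x => (kern x y)%:E) = (fun x => (x^-1)%:E) \_ `[y / 2, 2 * y].
  apply/funext => x; rewrite /patch /kern.
  by rewrite mem_setE /= in_itv /=; case: ifP.
rewrite kernT -integral_mkcond (@continuous_FTC2 _ _ (@ln R) _ _ y2_lt_2y).
- rewrite -EFinB -ln_div ?posrE; [|lra|lra].
  by rewrite (_ : 2 * y / (y / 2) = 4) //; field; lra.
- apply: continuous_in_subspaceT => x; rewrite inE /= in_itv /= => /andP[yx _].
  by apply: inv_continuous; lra.
- split.
  + by move=> x; rewrite in_itv /= => /andP[yx _]; apply: ex_derive; apply: is_derive1_ln; lra.
  + by apply: cvg_at_right_filter; apply: continuous_ln; lra.
  + by apply: cvg_at_left_filter; apply: continuous_ln; lra.
- move=> x; rewrite in_itv /= => /andP[yx _].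
  by rewrite derive1E; apply: derive_val; apply: is_derive1_ln; lra.
Qed.

Lemma measurable_inv : measurable_fun setT (@GRing.inv R).
Proof.
rewrite (_ : GRing.inv = fun x : R => if x == 0 then 0 else x^-1); last first.
  by apply/funext => x; case: eqP => // ->; rewrite invr0.
apply: measurable_fun_if => //.
- by apply: measurable_fun_eqr => //; exact: measurable_cst.
rewrite setTI (_ : _ @^-1` _ = [set x : R | x != 0]); last first.
  by apply/seteqP; split => x /=; case: eqP.
apply: open_continuous_measurable_fun; first exact: open_neq.
by move=> x; rewrite inE /= => x0; exact: inv_continuous.
Qed.

Lemma measurable_kern d (T : measurableType d) (f g : T -> R) :
  measurable_fun setT f -> measurable_fun setT g ->
  measurable_fun setT (fun t => kern (f t) (g t)).
Proof.
move=> mf mg; apply: measurable_fun_ifT.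
- apply: measurable_and; apply: measurable_fun_ler => //;
    by apply: measurable_funM => //; exact: measurable_cst.
- exact: measurableT_comp measurable_inv mf.
- exact: measurable_cst.
Qed.

End kernel.

Section kern_iter.
Context {R : realType} (c : R).
Notation mu := (@lebesgue_measure R).
Local Open Scope ereal_scope.

Fixpoint kern_iter (n : nat) (x : R) : \bar R :=
  if n is n'.+1 then \int[mu]_y ((kern x y)%:E * kern_iter n' y)
  else (kern x c)%:E.

Lemma kern_iter_ge0 n x : 0 <= kern_iter n x.
Proof.
elim: n x => [|n IH] x /=; first by rewrite lee_fin kern_ge0.
by apply: integral_ge0 => y _; rewrite mule_ge0 ?lee_fin ?kern_ge0.
Qed.

Let measurable_kern_mul {n} : measurable_fun setT (fun x : R => kern_iter n x) ->
  measurable_fun setT (fun z : R * R => (kern z.1 z.2)%:E * kern_iter n z.2).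
Proof.
move=> mU; apply: emeasurable_funM; last exact: measurableT_comp mU measurable_snd.
by apply/measurable_EFinP; apply: measurable_kern.
Qed.

Lemma measurable_kern_iter n : measurable_fun setT (kern_iter n).
Proof.
elim: n => [|n IH] /=.
  by apply/measurable_EFinP; apply: measurable_kern => //; exact: measurable_cst.
have F0 z : 0 <= (kern z.1 z.2)%:E * kern_iter n z.2.
  by rewrite mule_ge0 ?lee_fin ?kern_ge0 ?kern_iter_ge0.
exact: (@measurable_fun_fubini_tonelli_F _ _ _ _ _ mu _ (measurable_kern_mul IH) F0).
Qed.

(* By Tonelli, integrate first in [x], which gives a factor [\int kern x y dx <= ln 4]. *)
Lemma integral_kern_iter_le n : \int[mu]_x kern_iter n x <= (ln 4 ^+ n.+1)%:E.
Proof.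
have ln4_ge0 : (0 <= ln (4 : R))%R by rewrite ln_ge0 // ler1n.
elim: n => [|n IH] /=; first by rewrite expr1; exact: integral_kern_le.
have F0 z : 0 <= (kern z.1 z.2)%:E * kern_iter n z.2.
  by rewrite mule_ge0 ?lee_fin ?kern_ge0 ?kern_iter_ge0.
rewrite (@fubini_tonelli _ _ _ _ _ mu mu _ (measurable_kern_mul (measurable_kern_iter n)) F0) /=.
apply: (@le_trans _ _ (\int[mu]_y ((ln 4)%:E * kern_iter n y))).
  apply: ge0_le_integral_nomeas => y _.
    by apply: integral_ge0 => x _; exact: (F0 (x, y)).
  rewrite ge0_integralZr ?kern_iter_ge0 //.
  - by rewrite lee_wpmul2r ?kern_iter_ge0 ?integral_kern_le.
  - by apply/measurable_EFinP; apply: measurable_kern => //; exact: measurable_cst.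
  - by move=> x _; rewrite lee_fin kern_ge0.
rewrite ge0_integralZl_EFin //.
- by rewrite exprS EFinM lee_wpmul2l ?lee_fin.
- by move=> y _; exact: kern_iter_ge0.
- exact: measurable_kern_iter.
Qed.

End kern_iter.

Section iterated_integral.
Context {R : realType} {E : eqType}.
Notation mu := (@lebesgue_measure R).
Implicit Types (s : seq E) (F G : (E -> R) -> \bar R) (lam l : E -> R).
Local Open Scope ereal_scope.

Lemma upd_eq lam e x : upd lam e x e = x.
Proof. by rewrite /upd eqxx. Qed.

Lemma upd_neq lam e x e' : e' != e -> upd lam e x e' = lam e'.
Proof. by rewrite /upd => /negbTE ->. Qed.

Lemma iint_cons e s F lam :
  iint (e :: s) F lam = \int[mu]_(x in `]0%R, +oo[) iint s F (upd lam e x).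
Proof. by []. Qed.

Definition agree_off s l lam := forall e, e \notin s -> l e = lam e.

Lemma agree_off_upd e s l lam x :
  agree_off s l (upd lam e x) -> agree_off (e :: s) l lam.
Proof.
move=> agree_l e'; rewrite in_cons negb_or => /andP[e'e e's].
by rewrite agree_l // upd_neq.
Qed.

Lemma eq_iint s F G lam : (forall l, agree_off s l lam -> F l = G l) ->
  iint s F lam = iint s G lam.
Proof.
elim: s lam => [|e s IH] lam FG /=; first exact: FG.
apply: eq_integral => x _; apply: IH => l /agree_off_upd; exact: FG.
Qed.

Lemma iint_ge0 s F lam : (forall l, agree_off s l lam -> 0 <= F l) ->
  0 <= iint s F lam.
Proof.
elim: s lam => [|e s IH] lam F0 /=; first exact: F0.
apply: integral_ge0 => x _; apply: IH => l /agree_off_upd; exact: F0.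
Qed.

Lemma ge0_le_iint s F G lam :
  (forall l, agree_off s l lam -> 0 <= F l) ->
  (forall l, agree_off s l lam -> F l <= G l) -> iint s F lam <= iint s G lam.
Proof.
elim: s lam => [|e s IH] lam F0 FG /=; first exact: FG.
apply: ge0_le_integral_nomeas => x _.
  by apply: iint_ge0 => l /agree_off_upd; exact: F0.
by apply: IH => l /agree_off_upd; [exact: F0|exact: FG].
Qed.

Lemma iint_cat s1 s2 F lam : iint (s1 ++ s2) F lam = iint s1 (iint s2 F) lam.
Proof.
by elim: s1 lam => [|e s1 IH] lam //=; apply: eq_integral => x _; rewrite IH.
Qed.

End iterated_integral.

Section kern_path.
Context {R : realType} {E : eqType}.
Notation mu := (@lebesgue_measure R).
Local Notation pos := (`]0%R, +oo[%classic : set R).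
Implicit Types (s : seq E) (lam l : E -> R) (x y C K : R).

Fixpoint kern_path l (p : E) s : R :=
  if s is e :: s' then kern (l e) (l p) * kern_path l e s' else 1.

Lemma kern_path_ge0 l p s : 0 <= kern_path l p s.
Proof. by elim: s p => [|e s IH] p //=; rewrite mulr_ge0 ?kern_ge0. Qed.

Lemma eq_kern_path l l' p s : {in p :: s, l =1 l'} ->
  kern_path l p s = kern_path l' p s.
Proof.
elim: s p => [|e s IH] p //= ll'.
have ll'_tail : {in e :: s, l =1 l'} by move=> e' e's; apply: ll'; rewrite inE e's orbT.
by rewrite (ll' p) ?mem_head // (ll'_tail e) ?mem_head // IH.
Qed.

Lemma kern_path_rcons l p s e :
  kern_path l p (rcons s e) = kern_path l p s * kern (l e) (l (last p s)).
Proof. by elim: s p => [|e' s IH] p /=; rewrite ?mul1r ?mulr1 // IH mulrA. Qed.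

Lemma integral_scaled_kern_le K y : 0 <= K ->
  (\int[mu]_(x in pos) (K * kern x y)%:E <= (K * ln 4)%:E)%E.
Proof.
move=> K0; apply: le_trans; first apply: ge0_integral_le_setT.
  by move=> x; rewrite lee_fin mulr_ge0 ?kern_ge0.
under eq_integral do rewrite EFinM.
rewrite ge0_integralZl_EFin //.
- by rewrite EFinM lee_wpmul2l ?lee_fin ?integral_kern_le.
- by move=> x _; rewrite lee_fin kern_ge0.
- by apply/measurable_EFinP; apply: measurable_kern => //; exact: measurable_cst.
Qed.

(* Each kernel involves a more outer variable (or the fixed [p]), so the
   integrals can be evaluated from the inside out, each giving at most [ln 4]. *)
Lemma iint_kern_path_le s p C lam : uniq (p :: s) -> 0 <= C ->
  (iint s (fun l => (C * kern_path l p s)%:E) lam <= (C * ln 4 ^+ size s)%:E)%E.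
Proof.
elim: s p C lam => [|e s IH] p C lam /=; first by rewrite !mulr1.
rewrite !inE negb_or => /andP[/andP[pe ps] /andP[es us]] C0.
have K0 : 0 <= C * ln 4 ^+ size s by rewrite mulr_ge0 // exprn_ge0 // ln_ge0 // ler1n.
rewrite exprSr mulrA; apply: (le_trans _ (integral_scaled_kern_le _ (lam p) K0)).
apply: ge0_le_integral_nomeas => x _.
  by apply: iint_ge0 => l _; rewrite lee_fin mulr_ge0 ?mulr_ge0 ?kern_path_ge0 ?kern_ge0.
rewrite (@eq_iint _ _ _ _ (fun l => (C * kern x (lam p) * kern_path l e s)%:E)).
  by rewrite mulrAC; apply: IH; rewrite ?mulr_ge0 ?kern_ge0 //= es.
by move=> l agree_l; rewrite mulrA !agree_l ?upd_eq ?upd_neq.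
Qed.

Implicit Types (g : R -> R).

Lemma kern_path_rev_cons2 l z e e' s :
  kern_path l z (rev [:: e, e' & s]) = kern_path l z (rev (e' :: s)) * kern (l e) (l e').
Proof. by rewrite [in LHS]rev_cons kern_path_rcons rev_cons last_rcons. Qed.

(* Here the outermost variable [x = l e] is the one whose kernel involves an
   inner variable, so the inner integrals are collected into [kern_iter]. *)
Lemma iint_kern_path_rev_cons_le {s e z} g lam : uniq [:: z, e & s] ->
  (forall x, 0 <= g x) ->
  (iint (e :: s) (fun l => (g (l e) * kern_path l z (rev (e :: s)))%:E) lam <=
   \int[mu]_(x in pos) ((g x)%:E * kern_iter (lam z) (size s) x))%E.
Proof.
elim: s e g lam => [|e' s IH] e g lam.
  rewrite /= !inE => /andP[ze _] g0.
  apply: ge0_le_integral_nomeas => x _; first by rewrite lee_fin !mulr_ge0 ?g0 ?kern_ge0.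
  by rewrite upd_eq upd_neq // mulr1 EFinM.
rewrite [uniq _]/= !inE !negb_or => /andP[/and3P[ze ze' zs] /andP[/andP[ee' es] us]] g0.
rewrite iint_cons; apply: ge0_le_integral_nomeas => x _.
  by apply: iint_ge0 => l _; rewrite lee_fin mulr_ge0 ?kern_path_ge0.
pose gx y := g x * kern x y.
rewrite (@eq_iint _ _ _ _ (fun l => (gx (l e') * kern_path l z (rev (e' :: s)))%:E)); last first.
  move=> l agree_l; rewrite kern_path_rev_cons2 agree_l ?upd_eq; last by rewrite inE negb_or ee'.
  by rewrite /gx mulrAC mulrA.
apply: le_trans (IH e' gx _ _ _) _.
- by rewrite /= inE negb_or ze' zs.
- by move=> y; rewrite mulr_ge0 ?kern_ge0.
rewrite upd_neq //; apply: le_trans (ge0_integral_le_setT _ _ _) _.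
  by move=> y; rewrite mule_ge0 ?kern_iter_ge0 // lee_fin mulr_ge0 ?kern_ge0.
under eq_integral do rewrite EFinM -muleA.
rewrite ge0_integralZl_EFin //.
- by move=> y _; rewrite mule_ge0 ?kern_iter_ge0 ?lee_fin ?kern_ge0.
- apply: emeasurable_funM; last exact: measurable_kern_iter.
  by apply/measurable_EFinP; apply: measurable_kern => //; exact: measurable_cst.
Qed.

Lemma iint_kern_path_rev_le s z C lam : uniq (z :: s) -> 0 <= C ->
  (iint s (fun l => (C * kern_path l z (rev s))%:E) lam <= (C * ln 4 ^+ size s)%:E)%E.
Proof.
case: s => [|e s] uzs C0; first by rewrite /= !mulr1.
apply: le_trans (iint_kern_path_rev_cons_le (fun=> C) lam uzs (fun=> C0)) _.
apply: le_trans (ge0_integral_le_setT _ _ _) _.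
  by move=> x; rewrite mule_ge0 ?kern_iter_ge0 ?lee_fin.
rewrite ge0_integralZl_EFin //.
- by rewrite EFinM lee_wpmul2l ?lee_fin ?integral_kern_iter_le.
- by move=> x _; exact: kern_iter_ge0.
- exact: measurable_kern_iter.
Qed.

Lemma iint_kern_path_cat_le A z B lam : uniq (A ++ z :: B) ->
  (iint (A ++ B) (fun l => (kern_path l z (rev A) * kern_path l z B)%:E) lam
   <= (ln 4 ^+ (size A + size B))%:E)%E.
Proof.
move=> uniq_AzB; have uniq_zB : uniq (z :: B) by move: uniq_AzB; rewrite cat_uniq => /and3P[].
have : uniq ((z :: A) ++ B).
  by rewrite -(perm_uniq (_ : perm_eq (A ++ z :: B) _)) // (perm_catCA A [:: z] B).
rewrite cat_uniq has_sym => /and3P[uniq_zA /hasPn zA_B _].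
have ln4B_ge0 : 0 <= ln 4 ^+ size B :> R by rewrite exprn_ge0 // ln_ge0 // ler1n.
rewrite iint_cat addnC exprD EFinM.
apply: (@le_trans _ _ (iint A (fun l => (ln 4 ^+ size B * kern_path l z (rev A))%:E) lam)).
  apply: ge0_le_iint => l _.
    by apply: iint_ge0 => l' _; rewrite lee_fin mulr_ge0 ?kern_path_ge0.
  rewrite (@eq_iint _ _ _ _ (fun l' => (kern_path l z (rev A) * kern_path l' z B)%:E)).
    by rewrite mulrC; apply: iint_kern_path_le; rewrite ?kern_path_ge0.
  move=> l' agree_l'; congr ((_ * _)%:E); apply: eq_kern_path => e.
  by rewrite in_cons mem_rev -in_cons => /zA_B /agree_l'.
by rewrite -EFinM; apply: iint_kern_path_rev_le.
Qed.

End kern_path.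

Lemma sorted_map_enum_ord (T : Type) (r : rel T) m (c : 'I_m -> T) :
  (forall (j : 'I_m) (lt_j1m : (j.+1 < m)%N), r (c j) (c (Ordinal lt_j1m))) ->
  sorted r [seq c j | j <- enum 'I_m].
Proof.
case: m c => [|m] c rc; first by rewrite enum_ord0.
apply/(sortedP (c ord0)) => k; rewrite size_map size_enum_ord => lt_k1m.
have lt_km : (k < m.+1)%N by apply: ltnW.
(* [nth_map] exposes [Finite.enum], which [enumT] folds back into [enum]. *)
rewrite !(nth_map ord0); rewrite -?enumT ?size_enum_ord //.
have -> : nth ord0 (enum 'I_m.+1) k = Ordinal lt_km.
  by apply: val_inj; rewrite /= nth_enum_ord.
have -> : nth ord0 (enum 'I_m.+1) k.+1 = Ordinal lt_k1m.
  by apply: val_inj; rewrite /= nth_enum_ord.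
exact: rc.
Qed.

Lemma ord3_cases (k : 'I_3) : k = 0 \/ k = 1 \/ k = 2.
Proof. by case: k => [[|[|[|//]]] ?]; [left|right; left|right; right]; apply: val_inj. Qed.

Section linked.
Context {R : realType} {V E : finType} (ends : V -> 'I_3 -> E) (L : V -> 'I_3).
Implicit Types (l : E -> R) (e f : E).

Definition linkedb : rel E := fun e f => `[< linked ends L e f >].

Lemma linked_sym {e f} : linked ends L e f -> linked ends L f e.
Proof.
by case=> v [k1] [k2] [k12 Lk1 Lk2 <- <-]; exists v, k2, k1; split; rewrite // eq_sym.
Qed.

Lemma rev_sorted_linkedb s : sorted linkedb (rev s) = sorted linkedb s.
Proof.
rewrite rev_sorted; case: s => //= e s; apply: eq_path => f f'.
by apply/asboolP/asboolP => /linked_sym.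
Qed.

Lemma DeltaL_triangle {l} v {k1 k2 k3 : 'I_3} : DeltaL ends L l ->
  k1 != k2 -> k1 != k3 -> k2 != k3 -> l (ends v k1) <= l (ends v k2) + l (ends v k3).
Proof.
case=> _ [/(_ v) [t0 t1 t2] _].
case: (ord3_cases k1) => [->|[->|->]]; case: (ord3_cases k2) => [->|[->|->]];
  by case: (ord3_cases k3) => [->|[->|->]] => // _ _ _; lra.
Qed.

Lemma DeltaL_linked_le {l e f} : DeltaL ends L l -> linked ends L e f -> l e <= 2 * l f.
Proof.
move=> Dl [v [k1 [k2 [k12 Lk1 Lk2 <- <-]]]].
rewrite eq_sym in Lk1; rewrite eq_sym in Lk2.
have := DeltaL_triangle v Dl k12 Lk1 Lk2; have [_ [_ /(_ v k2)]] := Dl; lra.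
Qed.

Lemma kern_linked {l e f} : DeltaL ends L l -> linked ends L e f ->
  kern (l e) (l f) = (l e)^-1.
Proof.
move=> Dl ef; apply: kernE; first by case: Dl.
  exact: DeltaL_linked_le Dl ef.
exact: DeltaL_linked_le Dl (linked_sym ef).
Qed.

Lemma kern_path_prod {l p s} : DeltaL ends L l -> path linkedb p s ->
  kern_path l p s = \prod_(e <- s) (l e)^-1.
Proof.
move=> Dl; elim: s p => [|e s IH] p /=; first by rewrite big_nil.
case/andP=> /asboolP pe es; rewrite big_cons IH // kern_linked //.
exact: linked_sym.
Qed.

Lemma indic_DeltaL_prod_le l {A z B} :
  path linkedb z (rev A) -> path linkedb z B ->
  0 <= (\1_(DeltaL ends L) l : R) * \prod_(e <- A ++ B) (l e)^-1
    <= kern_path l z (rev A) * kern_path l z B.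
Proof.
move=> chainA chainB; rewrite indicE.
case: (boolP (l \in DeltaL ends L)) => [/set_mem Dl|_]; last first.
  by rewrite mul0r lexx mulr_ge0 ?kern_path_ge0.
rewrite mul1r big_cat -big_rev -(kern_path_prod Dl chainA) -(kern_path_prod Dl chainB).
by rewrite lexx mulr_ge0 ?kern_path_ge0.
Qed.

Lemma iint_chain_le A z B lam :
  sorted linkedb (A ++ z :: B) -> uniq (A ++ z :: B) ->
  (iint (A ++ B)
     (fun l => ((\1_(DeltaL ends L) l : R) * \prod_(e <- A ++ B) (l e)^-1)%:E) lam
   <= (ln 4 ^+ (size A + size B))%:E)%E.
Proof.
rewrite sorted_cat_cons -rev_sorted_linkedb rev_rcons => /andP[chainA chainB] uniq_AzB.
apply: le_trans (iint_kern_path_cat_le _ _ _ lam uniq_AzB).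
apply: ge0_le_iint => l _; rewrite lee_fin;
  by case/andP: (indic_DeltaL_prod_le l chainA chainB).
Qed.

End linked.

Lemma filter_predC1_cat_cons (T : eqType) (x : T) s1 s2 : uniq (s1 ++ x :: s2) ->
  [seq y <- s1 ++ x :: s2 | y != x] = s1 ++ s2.
Proof.
rewrite cat_uniq /= => /and3P[_ /norP[x_s1 _] /andP[x_s2 _]].
rewrite filter_cat /= eqxx; congr (_ ++ _); apply/all_filterP/allP => y y_s.
  by apply: contraNneq x_s1 => <-.
by apply: contraNneq x_s2 => <-.
Qed.

Theorem mainTheorem8 (R : realType) (V E : finType) (ends : V -> 'I_3 -> E)
  (Htri : trivalent ends) (L : V -> 'I_3)
  (m : nat) (c : 'I_m -> E) (Hinj : injective c)
  (Hchain : forall (j : 'I_m) (Hj : (j.+1 < m)%N), linked ends L (c j) (c (Ordinal Hj)))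
  (i : 'I_m) (lam0 : E -> R) :
  (iint [seq c j | j <- enum 'I_m & j != i]
     (fun lam : E -> R =>
        ((\1_(DeltaL ends L) lam : R) *
         \prod_(j <- enum 'I_m | j != i) (lam (c j))^-1)%:E)
     lam0
   <= ((ln (4 : R)) ^+ m.-1)%:E)%E.
Proof.
have chain : sorted (linkedb ends L) [seq c j | j <- enum 'I_m].
  by apply: sorted_map_enum_ord => j lt_j1m; apply/asboolP; exact: Hchain.
have uniq_c : uniq [seq c j | j <- enum 'I_m] by rewrite map_inj_uniq ?enum_uniq.
have i_enum : i \in enum 'I_m by rewrite mem_enum.
move: chain uniq_c (enum_uniq 'I_m) (size_enum_ord m).
case/splitPr: i_enum => s1 s2; rewrite map_cat => chain uniq_c uniq_s size_s.
have -> : m.-1 = (size (map c s1) + size (map c s2))%N.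
  by move/(congr1 predn): size_s; rewrite size_cat addnS !size_map => <-.
rewrite filter_predC1_cat_cons // map_cat.
under eq_iint => l _.
  rewrite -big_filter filter_predC1_cat_cons // -(big_map c predT (fun e => (l e)^-1)).
  by rewrite map_cat; over.
exact: (iint_chain_le ends L _ _ _ lam0 chain uniq_c).
Qed.
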